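(* Let $(W,S)$ be a right-angled Coxeter system, $G$ a subgroup of $\mathrm{Aut}(W,S)$, $I\subset S$, and $\{g_i\}_{i\in I}$ a family of involutions in $G$ such that: (i) $g_i(s)\in S$ for all $i\in I$, $s\in S$; (ii) for all $i,j\in I$ with $ij=ji$, either [$g_i(j)\in I$, $g_j(i)=i$ and $g_{g_i(j)}=g_ig_jg_i$] or [$g_j(i)\in I$, $g_i(j)=j$ and $g_{g_j(i)}=g_jg_ig_j$]; (iii) $g_i(i)=i$ for all $i\in I$. Let $H$ be the subgroup of $W\rtimes G$ generated by $\{ig_i\}_{i\in I}$, and let $L$ be the group generated by symbols $l_i$, $i\in I$, subject to the relations $l_i^2=1$ for all $i\in I$, and $l_il_j=l_{g_i(j)}l_i$ whenever $ij=ji$, $g_j(i)=i$, $g_i(j)\in I$ and $g_{g_i(j)}=g_ig_jg_i$. Then the map $\varphi:L\to H$, $l_i\mapsto ig_i$, is a well-defined group isomorphism.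
   Context: A right-angled Coxeter system is a Coxeter system whose Coxeter matrix has all off-diagonal entries in $\{2,\infty\}$. $\mathrm{Aut}(W,S)$ denotes the group of automorphisms of $W$ that map $S$ bijectively onto $S$. $W\rtimes G$ is the semidirect product with multiplication $(x,\alpha)(y,\beta)=(x\alpha(y),\alpha\beta)$, and $ig_i$ denotes the element $(i,g_i)$. *)

From Stdlib Require Import List.
Import ListNotations.
Set Implicit Arguments.

(** * Coxeter systems given by a Coxeter matrix; W is the presented group.
    [m s t = 0] encodes m(s,t) = infinity. *)

Fixpoint rep {A : Type} (n : nat) (w : list A) : list A :=
  match n with O => [] | S k => w ++ rep k w end.

Definition coxeter_matrix {S : Type} (m : S -> S -> nat) : Prop :=
  (forall s, m s s = 1) /\ (forall s t, m s t = m t s) /\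
  (forall s t, s <> t -> m s t = 0 \/ 2 <= m s t).

Definition right_angled {S : Type} (m : S -> S -> nat) : Prop :=
  coxeter_matrix m /\ (forall s t, s <> t -> m s t = 2 \/ m s t = 0).

(** Congruence on words generated by a set of relators [rel]
    (equations [r ~ []]); since all generators are involutions in our
    presentations, words modulo this congruence form the presented group. *)
Inductive wcong {A : Type} (rel : list A -> Prop) : list A -> list A -> Prop :=
| wc_rel : forall u r v, rel r -> wcong rel (u ++ r ++ v) (u ++ v)
| wc_refl : forall u, wcong rel u u
| wc_sym : forall u v, wcong rel u v -> wcong rel v u
| wc_trans : forall u v w, wcong rel u v -> wcong rel v w -> wcong rel u w.

Definition cox_rel {S : Type} (m : S -> S -> nat) (r : list S) : Prop :=
  exists s t, 1 <= m s t /\ r = rep (m s t) [s; t].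

Definition Weq {S : Type} (m : S -> S -> nat) : list S -> list S -> Prop :=
  wcong (cox_rel m).

(** Aut(W,S): an automorphism of W mapping S bijectively onto S is
    determined by (and represented as) its restriction sigma : S -> S,
    which must be a bijection of S whose letter-wise extension to words
    induces a well-defined injective endomorphism of W. *)
Definition autWS {S : Type} (m : S -> S -> nat) (sigma : S -> S) : Prop :=
  (exists tau : S -> S, (forall s, tau (sigma s) = s) /\ (forall s, sigma (tau s) = s)) /\
  (forall u v, Weq m u v <-> Weq m (map sigma u) (map sigma v)).

Definition subgroup_Aut {S : Type} (m : S -> S -> nat) (G : (S -> S) -> Prop) : Prop :=
  (forall a, G a -> autWS m a) /\
  G (fun s => s) /\
  (forall a b, G a -> G b -> G (fun s => a (b s))) /\
  (forall a b, G a -> (forall s, a (b s) = s /\ b (a s) = s) -> G b) /\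
  (forall a b, G a -> (forall s, a s = b s) -> G b).

Definition sd (S : Type) : Type := (list S * (S -> S))%type.

Definition sd_mul {S : Type} (p q : sd S) : sd S :=
  (fst p ++ map (snd p) (fst q), fun s => snd p (snd q s)).

Definition sd_one {S : Type} : sd S := ([], fun s => s).

Definition sd_eq {S : Type} (m : S -> S -> nat) (p q : sd S) : Prop :=
  Weq m (fst p) (fst q) /\ (forall s, snd p s = snd q s).

Inductive inH {S : Type} (m : S -> S -> nat) (I : S -> Prop) (g : S -> S -> S)
  : sd S -> Prop :=
| H_one : inH m I g sd_one
| H_gen : forall i, I i -> inH m I g ([i], g i)
| H_mul : forall p q, inH m I g p -> inH m I g q -> inH m I g (sd_mul p q)
| H_inv : forall p q, inH m I g p -> sd_eq m (sd_mul p q) sd_one -> inH m I g q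
| H_eq : forall p q, inH m I g p -> sd_eq m p q -> inH m I g q.

Definition L_rel {S : Type} (m : S -> S -> nat) (I : S -> Prop) (g : S -> S -> S)
  (r : list S) : Prop :=
  (exists i, I i /\ r = [i; i]) \/
  (exists i j, I i /\ I j /\ Weq m [i; j] [j; i] /\ g j i = i /\ I (g i j) /\
     (forall s, g (g i j) s = g i (g j (g i s))) /\
     r = [i; j; i; g i j]).
(* l_i l_j = l_{g_i(j)} l_i  is equivalent, given l_k^2 = 1, to the relator
   l_i l_j l_i l_{g_i(j)} = 1. *)

Definition Leq {S : Type} (m : S -> S -> nat) (I : S -> Prop) (g : S -> S -> S)
  : list S -> list S -> Prop := wcong (L_rel m I g).

Definition wordI {S : Type} (I : S -> Prop) (u : list S) : Prop := Forall I u.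

Fixpoint phi {S : Type} (g : S -> S -> S) (u : list S) : sd S :=
  match u with
  | [] => sd_one
  | i :: u' => sd_mul ([i], g i) (phi g u')
  end.

(* Each defining relator of L is sent by phi to the identity of W x| G, so phi
   is a well-defined homomorphism onto the subgroup H generated by the (i, g_i).
   For injectivity, suppose phi u = phi v: then the W-component of phi (u v^-1)
   represents 1 in W. In a right-angled Coxeter group such a word reduces to the
   empty word by deleting squares [a a] and swapping commuting letters (Tits);
   this follows from Newman's lemma for the rewriting "swap commuting letters,
   cancel [s r s] when [s] commutes with [r]". Every such move on the W-component
   of phi w lifts to a relation of L applied to w: a square [a a] comes from a
   factor [l_i l_i], and a swap of commuting letters from a relation
   [l_i l_j = l_(g_i j) l_i] provided by condition (ii). Hence u v^-1 = 1 in L. *)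

From Stdlib Require Import List Relations Lia Classical.
Import ListNotations.

Local Notation star R := (clos_refl_trans _ R).

Lemma rt_map {A B} (R : relation A) (R' : relation B) (f : A -> B) :
  (forall x y, R x y -> R' (f x) (f y)) ->
  forall x y, star R x y -> star R' (f x) (f y).
Proof.
  intros Hf x y H; induction H; [apply rt_step, Hf | apply rt_refl | eapply rt_trans]; eauto.
Qed.

Lemma rt_mono {A} (R R' : relation A) :
  inclusion _ R R' -> inclusion _ (star R) (star R').
Proof. intros HR; exact (rt_map R R' (fun x => x) HR). Qed.

Section Commutation.
Variable A : Type.
Variable comm : A -> A -> Prop.
Hypothesis comm_sym : forall a b, comm a b -> comm b a.
Hypothesis comm_irrefl : forall a, ~ comm a a.

Inductive swap_step : list A -> list A -> Prop :=
| swap_here a b q : comm a b -> swap_step (a :: b :: q) (b :: a :: q)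
| swap_cons c u v : swap_step u v -> swap_step (c :: u) (c :: v).

(* Cancelling the two letters of [s r s] is legitimate as soon as [s] commutes
   with every letter of [r]; adjacent cancellation alone is not confluent
   modulo swaps. *)
Inductive cancel_step : list A -> list A -> Prop :=
| cancel_here s r q : Forall (comm s) r -> cancel_step (s :: r ++ s :: q) (r ++ q)
| cancel_cons c u v : cancel_step u v -> cancel_step (c :: u) (c :: v).

Definition reduce_step x y := swap_step x y \/ cancel_step x y.

Definition joinable x y := exists z, star reduce_step x z /\ star reduce_step y z.

Lemma swap_step_sym x y : swap_step x y -> swap_step y x.
Proof. induction 1; constructor; auto. Qed.

Lemma swaps_sym x y : star swap_step x y -> star swap_step y x.
Proof.
  induction 1; [apply rt_step, swap_step_sym | apply rt_refl | eapply rt_trans]; eauto.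
Qed.

Lemma swaps_reduce x y : star swap_step x y -> star reduce_step x y.
Proof. apply rt_mono; left; auto. Qed.

Lemma cancel_reduce x y : cancel_step x y -> star reduce_step x y.
Proof. intros; apply rt_step; right; auto. Qed.

Lemma reduce_cons c x y : star reduce_step x y -> star reduce_step (c :: x) (c :: y).
Proof.
  apply rt_map; intros ? ? [H|H]; [left|right]; constructor; auto.
Qed.

Lemma swaps_cons c x y : star swap_step x y -> star swap_step (c :: x) (c :: y).
Proof. apply rt_map; constructor; auto. Qed.

Lemma joinable_refl x : joinable x x.
Proof. exists x; split; apply rt_refl. Qed.

Lemma joinable_sym x y : joinable x y -> joinable y x.
Proof. intros [z [H1 H2]]; exists z; auto. Qed.

Lemma joinable_cons c x y : joinable x y -> joinable (c :: x) (c :: y).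
Proof. intros [z [H1 H2]]; exists (c :: z); split; apply reduce_cons; auto. Qed.

Lemma cancel_app u x y : cancel_step x y -> cancel_step (u ++ x) (u ++ y).
Proof. induction u; simpl; auto using cancel_cons. Qed.

Lemma swaps_across s r q :
  Forall (comm s) r -> star swap_step (s :: r ++ q) (r ++ s :: q).
Proof.
  induction r as [|t r IH]; simpl; intros H; [apply rt_refl|].
  inversion H; subst.
  eapply rt_trans; [apply rt_step, swap_here; auto|].
  apply swaps_cons, IH; auto.
Qed.

Lemma cancel_here_app s r1 r2 q : Forall (comm s) r1 -> Forall (comm s) r2 ->
  cancel_step (s :: r1 ++ r2 ++ s :: q) (r1 ++ r2 ++ q).
Proof.
  intros H1 H2; rewrite !app_assoc; apply cancel_here, Forall_app; auto.
Qed.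

Lemma length_swap x y : swap_step x y -> length x = length y.
Proof. induction 1; simpl; auto. Qed.

Lemma length_swaps x y : star swap_step x y -> length x = length y.
Proof. induction 1; [apply length_swap | | etransitivity]; eauto. Qed.

Lemma length_cancel x y : cancel_step x y -> length x = S (S (length y)).
Proof. induction 1; simpl; [rewrite !length_app; simpl; lia | lia]. Qed.

Lemma length_reduce x y : star reduce_step x y -> length y <= length x.
Proof.
  induction 1 as [x y [H|H]| |]; try lia;
    [rewrite (length_swap _ _ H) | rewrite (length_cancel _ _ H)]; lia.
Qed.

Lemma cancel_step_inv x y : cancel_step x y ->
  (exists s r q, x = s :: r ++ s :: q /\ Forall (comm s) r /\ y = r ++ q) \/
  (exists c u v, x = c :: u /\ y = c :: v /\ cancel_step u v).
Proof. destruct 1; [left | right]; eauto 7. Qed.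

Lemma swap_step_inv x y : swap_step x y ->
  (exists a b q, x = a :: b :: q /\ comm a b /\ y = b :: a :: q) \/
  (exists c u v, x = c :: u /\ y = c :: v /\ swap_step u v).
Proof. destruct 1; [left | right]; eauto 7. Qed.

Lemma app_cons_split (a b c d : list A) x y : a ++ x :: c = b ++ y :: d ->
  (exists e, a = b ++ y :: e /\ d = e ++ x :: c) \/ (a = b /\ x = y /\ c = d) \/
  (exists e, b = a ++ x :: e /\ c = e ++ y :: d).
Proof.
  revert b; induction a as [|h a IH]; intros [|h' b]; simpl; intros H;
    injection H; intros; subst.
  - right; left; auto.
  - right; right; exists b; auto.
  - left; exists a; auto.
  - destruct (IH b H0) as [[e [-> ->]]|[[-> [-> ->]]|[e [-> ->]]]]; eauto 7.
Qed.

Lemma not_In_commuting s r : Forall (comm s) r -> ~ In s r.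
Proof. intros H Hin; apply (comm_irrefl s), (proj1 (Forall_forall _ _) H _ Hin). Qed.

(* Critical pairs in which one of the two cancellations uses the head letter. *)
Lemma cancel_head_joinable r s q y : Forall (comm s) r ->
  cancel_step (r ++ s :: q) y -> joinable (r ++ q) (s :: y).
Proof.
  revert y; induction r as [|t r IH]; intros y Hr Hd; simpl in *.
  - destruct (cancel_step_inv _ _ Hd) as [[s' [r' [q' [E [F ->]]]]]|[c [u [v [E [-> D]]]]]];
      injection E; intros; subst.
    + exists (r' ++ s' :: q'); split; [apply rt_refl|].
      apply swaps_reduce, swaps_across; auto.
    + exists v; split; [apply cancel_reduce; auto|].
      apply cancel_reduce, (cancel_here _ [] v); constructor.
  - inversion Hr; subst.
    destruct (cancel_step_inv _ _ Hd) as [[s' [r' [q' [E [F ->]]]]]|[c [u [v [E [-> D]]]]]].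
    + injection E as -> E'.
      destruct (app_cons_split _ _ _ _ _ _ E') as [[e [-> ->]]|[[_ [-> _]]|[e [-> ->]]]].
      * apply Forall_app in H2 as [F1 F2]; inversion F2; subst.
        exists (r' ++ e ++ q); split; apply cancel_reduce.
        -- rewrite <- app_assoc; apply cancel_here; auto.
        -- apply cancel_here_app; auto.
      * exfalso; eapply comm_irrefl; eauto.
      * apply Forall_app in F as [F1 F2]; inversion F2; subst.
        exists (r ++ e ++ q'); split; apply cancel_reduce.
        -- apply cancel_here_app; auto.
        -- rewrite <- app_assoc; apply cancel_here; auto.
    + injection E as <- <-.
      destruct (IH v) as [z [Z1 Z2]]; auto.
      exists (t :: z); split; [apply reduce_cons; auto|].
      eapply rt_trans; [apply rt_step; left; apply swap_here; auto|].
      apply reduce_cons; auto.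
Qed.

Lemma cancel_local_confluence x y1 y2 :
  cancel_step x y1 -> cancel_step x y2 -> joinable y1 y2.
Proof.
  intros H1; revert y2; induction H1 as [s r q F|c u v D IH]; intros y2 H2;
    destruct (cancel_step_inv _ _ H2) as [[s' [r' [q' [E [F' ->]]]]]|[c' [u' [v' [E [-> D']]]]]];
    injection E; intros; subst.
  - destruct (app_inj_pivot _ _ _ _ _ H) as [[[Hin _]|[_ Hin]]|[-> ->]].
    + exfalso; exact (not_In_commuting _ _ F Hin).
    + exfalso; exact (not_In_commuting _ _ F' Hin).
    + apply joinable_refl.
  - apply cancel_head_joinable; auto.
  - apply joinable_sym, cancel_head_joinable; auto.
  - apply joinable_cons; auto.
Qed.

Lemma swap_after_head_cancel r c q v : Forall (comm c) r ->
  swap_step (r ++ c :: q) v ->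
  exists w, cancel_step (c :: v) w /\ star swap_step (r ++ q) w.
Proof.
  revert v; induction r as [|t r IH]; intros v Hr Hs; simpl in *.
  - destruct (swap_step_inv _ _ Hs) as [[a [b [q' [E [C ->]]]]]|[c' [u [v' [E [-> S']]]]]];
      injection E; intros; subst.
    + exists (b :: q'); split; [apply (cancel_here _ [_] _); auto | apply rt_refl].
    + exists v'; split; [apply (cancel_here _ [] _); auto | apply rt_step; auto].
  - inversion Hr; subst.
    destruct (swap_step_inv _ _ Hs) as [[a [b [q' [E [C ->]]]]]|[c' [u [v' [E [-> S']]]]]];
      injection E; intros; subst.
    + destruct r as [|t' r]; simpl in *; injection H; intros; subst.
      * eexists; split; [apply (cancel_here _ [] _); auto | apply rt_refl].
      * inversion H2; subst.
        eexists; split.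
        -- apply (cancel_here _ (_ :: _ :: _) _); repeat apply Forall_cons; auto.
        -- apply rt_step, swap_here; auto.
    + destruct (IH v') as [w [D E']]; auto.
      destruct (cancel_step_inv _ _ D)
        as [[s' [r' [q' [E'' [F ->]]]]]|[d [u' [v'' [E'' [-> D']]]]]];
        injection E''; intros; subst.
      * eexists; split.
        -- apply (cancel_here _ (_ :: _) _); repeat apply Forall_cons; eauto.
        -- apply swaps_cons; eauto.
      * eexists; split.
        -- do 2 apply cancel_cons; eauto.
        -- eapply rt_trans; [apply swaps_cons; exact E'|].
           apply rt_step, swap_here; auto.
Qed.

Lemma swap_cancel_commute x y x' : swap_step x y -> cancel_step x x' ->
  exists y', cancel_step y y' /\ star swap_step x' y'.
Proof.
  intros Hs; revert x'; induction Hs as [a b q C|c u v S' IH]; intros x' Hd;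
    destruct (cancel_step_inv _ _ Hd)
      as [[s [r [q' [E [F ->]]]]]|[c' [u' [v' [E [-> D]]]]]];
    injection E; intros; subst.
  - destruct r as [|b' r]; simpl in *; injection H; intros; subst.
    + exfalso; eapply comm_irrefl; eauto.
    + inversion F; subst.
      exists (b' :: r ++ q'); split; [apply cancel_cons, cancel_here; auto | apply rt_refl].
  - destruct (cancel_step_inv _ _ D)
      as [[s [r [q' [E' [F ->]]]]]|[c'' [u'' [v'' [E' [-> D']]]]]];
      injection E'; intros; subst.
    + exists (c' :: r ++ q'); split; [apply (cancel_here s (c' :: r) q'); auto | apply rt_refl].
    + exists (c'' :: c' :: v''); split; [do 2 apply cancel_cons; auto|].
      apply rt_step, swap_here; auto.
  - apply swap_after_head_cancel; auto.
  - destruct (IH v') as [w [D' E']]; auto.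
    exists (c' :: w); split; [apply cancel_cons; auto | apply swaps_cons; auto].
Qed.

Lemma swaps_cancel_commute x y x' : star swap_step x y -> cancel_step x x' ->
  exists y', cancel_step y y' /\ star swap_step x' y'.
Proof.
  intros H; revert x'; induction H as [x y H|x|x y z _ IH1 _ IH2]; intros x' Hd.
  - eapply swap_cancel_commute; eauto.
  - exists x'; split; [auto | apply rt_refl].
  - destruct (IH1 _ Hd) as [y' [Dy Ey]].
    destruct (IH2 _ Dy) as [z' [Dz Ez]].
    exists z'; split; [auto | eapply rt_trans; eauto].
Qed.

Lemma reduce_decompose x y : star reduce_step x y ->
  star swap_step x y \/
  exists a a', star swap_step x a /\ cancel_step a a' /\ star reduce_step a' y.
Proof.
  induction 1 as [x y [H|H]|x|x y z _ [E1|[a [a' [E1 [D1 R1]]]]] _ [E2|[b [b' [E2 [D2 R2]]]]]].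
  - left; apply rt_step; auto.
  - right; exists x, y; repeat split; auto using rt_refl.
  - left; apply rt_refl.
  - left; eapply rt_trans; eauto.
  - right; exists b, b'; repeat split; auto. eapply rt_trans; eauto.
  - right; exists a, a'; repeat split; auto.
    eapply rt_trans; [exact R1 | apply swaps_reduce; auto].
  - right; exists a, a'; repeat split; auto. eapply rt_trans; [exact R1|].
    eapply rt_trans; [apply swaps_reduce; exact E2|].
    eapply rt_trans; [apply cancel_reduce; exact D2 | exact R2].
Qed.

(* Newman's lemma, by induction on the length: swaps are reversible and
   length-preserving, cancellations shorten the word. *)
Lemma reduce_confluent_below n : forall x, length x < n -> forall y1 y2,
  star reduce_step x y1 -> star reduce_step x y2 -> joinable y1 y2.
Proof.
  induction n as [|n IHn]; intros x Hx y1 y2 H1 H2; [lia|].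
  destruct (reduce_decompose _ _ H1) as [E1|[a [a' [Ea [Da Ha']]]]].
  { exists y2; split; [|apply rt_refl].
    eapply rt_trans; [apply swaps_reduce, swaps_sym, E1 | exact H2]. }
  destruct (reduce_decompose _ _ H2) as [E2|[b [b' [Eb [Db Hb']]]]].
  { exists y1; split; [apply rt_refl|].
    eapply rt_trans; [apply swaps_reduce, swaps_sym, E2 | exact H1]. }
  assert (Eab : star swap_step a b) by (eapply rt_trans; [apply swaps_sym, Ea | exact Eb]).
  destruct (swaps_cancel_commute _ _ _ Eab Da) as [a'' [Da'' Ea'']].
  destruct (cancel_local_confluence _ _ _ Da'' Db) as [z0 [Z1 Z2]].
  pose proof (length_swaps _ _ Ea); pose proof (length_swaps _ _ Eb).
  pose proof (length_cancel _ _ Da); pose proof (length_cancel _ _ Db).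
  pose proof (length_reduce _ _ Z2).
  assert (Hz0 : star reduce_step a' z0)
    by (eapply rt_trans; [apply swaps_reduce, Ea'' | exact Z1]).
  destruct (IHn a' ltac:(lia) y1 z0 Ha' Hz0) as [z1 [Y1 Z01]].
  destruct (IHn b' ltac:(lia) y2 z0 Hb' Z2) as [z2 [Y2 Z02]].
  destruct (IHn z0 ltac:(lia) z1 z2 Z01 Z02) as [z [W1 W2]].
  exists z; split; eapply rt_trans; eauto.
Qed.

Lemma joinable_trans x y z : joinable x y -> joinable y z -> joinable x z.
Proof.
  intros [a [H1 H2]] [b [H3 H4]].
  destruct (reduce_confluent_below (S (length y)) y ltac:(lia) a b H2 H3) as [c [C1 C2]].
  exists c; split; eapply rt_trans; eauto.
Qed.

End Commutation.

Arguments cancel_here {A comm}.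
Arguments swap_here {A comm}.
Arguments reduce_step {A}.
Arguments joinable {A}.
Arguments cancel_reduce {A comm x y}.
Arguments cancel_app {A comm}.

Lemma wcong_context {A} (R : list A -> Prop) p q x y :
  wcong R x y -> wcong R (p ++ x ++ q) (p ++ y ++ q).
Proof.
  induction 1 as [u r v Hr| | |]; [|apply wc_refl | apply wc_sym | eapply wc_trans]; eauto.
  replace (p ++ (u ++ r ++ v) ++ q) with ((p ++ u) ++ r ++ (v ++ q)) by now rewrite !app_assoc.
  replace (p ++ (u ++ v) ++ q) with ((p ++ u) ++ (v ++ q)) by now rewrite !app_assoc.
  apply wc_rel; auto.
Qed.

Lemma wcong_app {A} (R : list A -> Prop) x x' y y' :
  wcong R x y -> wcong R x' y' -> wcong R (x ++ x') (y ++ y').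
Proof.
  intros H1 H2; eapply wc_trans.
  - exact (wcong_context R [] x' x y H1).
  - pose proof (wcong_context R y [] x' y' H2) as H; rewrite !app_nil_r in H; exact H.
Qed.

Lemma wcong_inv_unique {A} (R : list A -> Prop) a b c :
  wcong R (a ++ b) [] -> wcong R (b ++ c) [] -> wcong R a c.
Proof.
  intros H1 H2; eapply wc_trans.
  - apply wc_sym; pose proof (wcong_context R a [] _ _ H2) as H.
    rewrite !app_nil_r in H; exact H.
  - rewrite app_assoc; exact (wcong_context R [] c _ _ H1).
Qed.

Section RightAngledWordProblem.
Variables (S : Type) (m : S -> S -> nat).
Hypothesis RA : right_angled m.

Definition commute_in a b := m a b = 2.

Lemma right_angled_relator r : cox_rel m r ->
  (exists s, r = [s; s]) \/ (exists s t, commute_in s t /\ r = [s; t; s; t]).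
Proof.
  destruct RA as [[Hd _] Hra]; intros [s [t [H1 ->]]].
  destruct (classic (s = t)) as [<-|Hst].
  - left; exists s; rewrite Hd; auto.
  - destruct (Hra s t Hst) as [E|E]; rewrite E in *; [right; eauto | lia].
Qed.

Lemma commute_in_sym a b : commute_in a b -> commute_in b a.
Proof. destruct RA as [[_ [Hs _]] _]; unfold commute_in; rewrite Hs; auto. Qed.

Lemma commute_in_irrefl a : ~ commute_in a a.
Proof. destruct RA as [[Hd _] _]; unfold commute_in; rewrite Hd; lia. Qed.

Lemma Weq_joinable x y : Weq m x y -> joinable commute_in x y.
Proof.
  induction 1 as [u r v Hr| | |].
  - exists (u ++ v); split; [|apply rt_refl].
    destruct (right_angled_relator r Hr) as [[s ->]|[s [t [C ->]]]].
    + apply cancel_reduce, cancel_app, (cancel_here s []); constructor.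
    + eapply rt_trans; [apply cancel_reduce, cancel_app, (cancel_here s [t] (t :: v))|].
      { repeat constructor; auto. }
      apply cancel_reduce, cancel_app, (cancel_here t []); constructor.
  - apply joinable_refl.
  - apply joinable_sym; auto.
  - eapply joinable_trans; eauto using commute_in_sym, commute_in_irrefl.
Qed.

Inductive move : list S -> list S -> Prop :=
| move_cancel p a q : move (p ++ a :: a :: q) (p ++ q)
| move_swap p a b q : m a b = 2 -> move (p ++ a :: b :: q) (p ++ b :: a :: q).

Lemma moves_cons c x y : star move x y -> star move (c :: x) (c :: y).
Proof.
  apply rt_map; intros x0 y0 [p a q|p a b q H].
  - exact (move_cancel (c :: p) a q).
  - exact (move_swap (c :: p) a b q H).
Qed.

Lemma reduce_moves x y : star (reduce_step commute_in) x y -> star move x y.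
Proof.
  induction 1 as [x y [H|H]| |]; [| |apply rt_refl | eapply rt_trans; eauto].
  - induction H; [apply rt_step, (move_swap []); auto | apply moves_cons; auto].
  - induction H as [s r q F|c u v H IH]; [|apply moves_cons; auto].
    induction r as [|t r IHr]; simpl; [apply rt_step, (move_cancel [])|].
    inversion F; subst.
    eapply rt_trans; [apply rt_step, (move_swap [] s t); auto|].
    apply moves_cons; auto.
Qed.

(* Tits' solution of the word problem, in the right-angled case. *)
Lemma Weq_nil_moves x : Weq m x [] -> star move x [].
Proof.
  intros H; destruct (Weq_joinable x [] H) as [z [Z1 Z2]].
  pose proof (length_reduce _ _ _ _ Z2) as Hz.
  destruct z; [apply reduce_moves; auto | simpl in Hz; lia].
Qed.

End RightAngledWordProblem.

Arguments move {S}.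

Local Notation wpart g u := (fst (phi g u)).
Local Notation gpart g u := (snd (phi g u)).

Lemma gpart_app {S} (g : S -> S -> S) u v s :
  gpart g (u ++ v) s = gpart g u (gpart g v s).
Proof. induction u as [|a u IH]; simpl; [|rewrite <- IH]; reflexivity. Qed.

Lemma wpart_app {S} (g : S -> S -> S) u v :
  wpart g (u ++ v) = wpart g u ++ map (gpart g u) (wpart g v).
Proof.
  induction u as [|a u IH]; simpl; [symmetry; apply map_id|].
  rewrite IH, map_app, map_map; reflexivity.
Qed.

Lemma wpart_two {S} (g : S -> S -> S) i j w :
  wpart g (i :: j :: w) = i :: g i j :: map (fun s => g i (g j s)) (wpart g w).
Proof. simpl; rewrite map_map; reflexivity. Qed.

Lemma sd_eq_refl {S} (m : S -> S -> nat) p : sd_eq m p p.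
Proof. split; [apply wc_refl | auto]. Qed.

Lemma sd_eq_trans {S} (m : S -> S -> nat) p q r :
  sd_eq m p q -> sd_eq m q r -> sd_eq m p r.
Proof.
  intros [A B] [C D]; split; [eapply wc_trans; eauto | intros; rewrite B; auto].
Qed.

Section PhiIsomorphism.
Variables (S : Type) (m : S -> S -> nat) (I : S -> Prop) (g : S -> S -> S).
Hypothesis RA : right_angled m.
Hypothesis g_aut : forall i, I i -> autWS m (g i).
Hypothesis g_invol : forall i, I i -> forall s, g i (g i s) = s.
Hypothesis g_commuting : forall i j, I i -> I j -> Weq m [i; j] [j; i] ->
     (I (g i j) /\ g j i = i /\ (forall s, g (g i j) s = g i (g j (g i s))))
     \/
     (I (g j i) /\ g i j = j /\ (forall s, g (g j i) s = g j (g i (g j s)))).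
Hypothesis g_fix : forall i, I i -> g i i = i.

Lemma Weq_cancel p q s : Weq m (p ++ s :: s :: q) (p ++ q).
Proof.
  apply (wc_rel _ p [s; s] q); exists s, s.
  destruct RA as [[Hd _] _]; rewrite Hd; auto.
Qed.

Lemma Weq_comm a b : m a b = 2 -> Weq m [a; b] [b; a].
Proof.
  intros H; apply wc_sym; eapply wc_trans.
  - apply wc_sym, (wc_rel _ [] [a; b; a; b] [b; a]); exists a, b; rewrite H; auto.
  - eapply wc_trans; [exact (Weq_cancel [a; b; a] [a] b) | exact (Weq_cancel [a; b] [] a)].
Qed.

Lemma gpart_Weq u : wordI I u ->
  forall x y, Weq m x y <-> Weq m (map (gpart g u) x) (map (gpart g u) y).
Proof.
  induction u as [|a u IH]; intros Hu x y; simpl; [rewrite !map_id; tauto|].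
  inversion Hu; subst.
  rewrite <- (map_map (gpart g u) (g a) x), <- (map_map (gpart g u) (g a) y).
  rewrite (IH ltac:(assumption)); apply (proj2 (g_aut a ltac:(assumption))).
Qed.

Lemma gpart_inj u : wordI I u -> forall x y, gpart g u x = gpart g u y -> x = y.
Proof.
  induction u as [|a u IH]; intros Hu x y; simpl; auto.
  inversion Hu; subst; intros E.
  apply IH; auto; rewrite <- (g_invol a H1 (gpart g u x)), <- (g_invol a H1 (gpart g u y)), E; auto.
Qed.

Lemma map_g_invol i l : I i -> map (g i) (map (g i) l) = l.
Proof.
  intros Hi; rewrite map_map, <- map_id; apply map_ext; intros; apply g_invol; auto.
Qed.

Lemma commute_conj i j : I i ->
  Weq m [i; j] [j; i] <-> Weq m [i; g i j] [g i j; i].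
Proof.
  intros Hi; rewrite (proj2 (g_aut i Hi) [i; j] [j; i]); simpl; rewrite g_fix; tauto.
Qed.

Lemma L_rel_phi_trivial r : L_rel m I g r ->
  wordI I r /\ Weq m (wpart g r) [] /\ forall s, gpart g r s = s.
Proof.
  intros [[i [Hi ->]] | [i [j [Hi [Hj [C [Hji [Hk [Hg ->]]]]]]]]];
    (split; [repeat constructor; auto|]); simpl.
  - rewrite g_fix; auto; split; [exact (Weq_cancel [] [] i) | intros; apply g_invol; auto].
  - rewrite Hji, (g_invol i Hi j), !g_fix; auto; split.
    + eapply wc_trans.
      * apply (wcong_app _ [i; g i j] [i; g i j] [i; g i j] [g i j; i] (wc_refl _ _)).
        apply (commute_conj i j Hi); auto.
      * eapply wc_trans; [exact (Weq_cancel [i] [i] (g i j)) | exact (Weq_cancel [] [] i)].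
    + intros s; rewrite Hg, !g_invol; auto.
Qed.

Lemma phi_Leq u v : Leq m I g u v ->
  (wordI I u <-> wordI I v) /\ (wordI I u -> sd_eq m (phi g u) (phi g v)).
Proof.
  induction 1 as [u r v Hr|u|u v _ [IH1 IH2]|u v w _ [IH1 IH2] _ [IH3 IH4]].
  - destruct (L_rel_phi_trivial r Hr) as [Wr [Tr Gr]].
    unfold wordI in *; rewrite !Forall_app; split; [tauto|].
    intros [Wu [_ Wv]]; split.
    + rewrite !wpart_app, map_app, map_map.
      apply (wcong_app _ _ _ _ _ (wc_refl _ _)).
      apply (wcong_app _ _ _ [] _); [exact (proj1 (gpart_Weq u Wu _ []) Tr)|].
      rewrite (map_ext (fun x => gpart g u (gpart g r x)) (gpart g u)); [apply wc_refl|].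
      intros; rewrite Gr; auto.
    + intros s; rewrite !gpart_app, Gr; auto.
  - split; [tauto | intros; apply sd_eq_refl].
  - split; [tauto|]; intros Hv; destruct (IH2 (proj2 IH1 Hv)) as [A B].
    split; [apply wc_sym; auto | intros; rewrite B; auto].
  - split; [tauto|]; intros Hu.
    apply (sd_eq_trans _ _ (phi g v)); [apply IH2 | apply IH4, IH1]; auto.
Qed.

Lemma wpart_split w : forall p x, wordI I w -> wpart g w = p ++ x ->
  exists w1 w2, w = w1 ++ w2 /\ wpart g w1 = p /\ map (gpart g w1) (wpart g w2) = x.
Proof.
  induction w as [|i w IH]; intros [|c p] x Hw E.
  - exists [], []; auto.
  - discriminate.
  - exists [], (i :: w); simpl; rewrite map_id; auto.
  - simpl in E; injection E as -> E.
    inversion Hw; subst.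
    assert (E' : wpart g w = map (g c) p ++ map (g c) x)
      by (rewrite <- map_app, <- E, map_g_invol; auto).
    destruct (IH _ _ H2 E') as [w1 [w2 [-> [F1 F2]]]].
    exists (c :: w1), w2; split; [reflexivity|]; split; simpl.
    + rewrite F1, map_g_invol; auto.
    + rewrite <- (map_map (gpart g w1) (g c)), F2, map_g_invol; auto.
Qed.

Lemma L_rel_square i : I i -> Leq m I g [i; i] [].
Proof. intros Hi; apply (wc_rel _ [] [i; i] []); left; exists i; auto. Qed.

(* Lifting a swap of the W-component: by (ii), [l_i l_j] equals [l_(g_i j) l_i]
   or [l_j l_(g_j i)] in L. *)
Lemma swap_relation i j : I i -> I j -> Weq m [i; g i j] [g i j; i] ->
  exists k l, I k /\ I l /\ Leq m I g [i; j] [k; l] /\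
    wpart g [k; l] = [g i j; i] /\ forall s, gpart g [k; l] s = gpart g [i; j] s.
Proof.
  intros Hi Hj C; apply commute_conj in C; auto.
  destruct (g_commuting i j Hi Hj C) as [[Ik [Hji Hk]] | [Ik [Hij Hk]]].
  - exists (g i j), i; repeat split; auto; simpl.
    + set (k := g i j) in *.
      assert (R : L_rel m I g [i; j; i; k]) by (right; exists i, j; repeat split; auto).
      eapply wc_trans; [apply wc_sym, (wcong_context _ [i; j] [] [i; i] []), L_rel_square; auto|].
      eapply wc_trans; [apply wc_sym, (wcong_context _ [i; j; i] [i] [k; k] []), L_rel_square; auto|].
      exact (wc_rel _ [] [i; j; i; k] [k; i] R).
    + rewrite Hk, g_fix, Hji, g_fix; auto.
    + intros s; simpl; rewrite Hk, g_invol; auto.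
  - exists j, (g j i); repeat split; auto; simpl.
    + set (k := g j i) in *.
      assert (C' : Weq m [j; i] [i; j]) by (apply wc_sym; auto).
      assert (R : L_rel m I g [j; i; j; k]) by (right; exists j, i; repeat split; auto).
      eapply wc_trans; [apply wc_sym, (wcong_context _ [] [i; j] [j; j] []), L_rel_square; auto|].
      eapply wc_trans; [apply wc_sym, (wcong_context _ [j; j; i; j] [] [k; k] []), L_rel_square; auto|].
      exact (wc_rel _ [j] [j; i; j; k] [k] R).
    + rewrite g_invol, Hij; auto.
    + intros s; simpl; rewrite Hk, g_invol; auto.
Qed.

Lemma move_lift x y : move m x y -> forall w, wordI I w -> wpart g w = x ->
  exists w', wordI I w' /\ wpart g w' = y /\ Leq m I g w w'.
Proof.
  intros Hm w Hw E.
  destruct Hm as [p a q|p a b q Hab];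
    destruct (wpart_split _ _ _ Hw E) as [w1 [w2 [-> [<- F2]]]];
    apply Forall_app in Hw as [W1 W2];
    (destruct w2 as [|i [|j w3]]; [discriminate | discriminate |]);
    inversion W2 as [|? ? Hi W2']; inversion W2' as [|? ? Hj W3]; subst;
    rewrite wpart_two in F2; simpl in F2; injection F2 as Fa Fb Fq.
  - assert (j = i) as ->.
    { rewrite <- (g_invol i Hi j), <- (gpart_inj w1 W1 _ _ (eq_trans Fa (eq_sym Fb))).
      apply g_fix; auto. }
    exists (w1 ++ w3); split; [apply Forall_app; auto|]; split.
    + rewrite wpart_app, <- Fq, map_map; f_equal.
      apply map_ext; intros; rewrite g_invol; auto.
    + exact (wcong_context _ w1 w3 _ _ (L_rel_square i Hi)).
  - assert (C : Weq m [i; g i j] [g i j; i]).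
    { apply (proj2 (gpart_Weq w1 W1 _ _)); simpl; rewrite Fa, Fb; apply Weq_comm; auto. }
    destruct (swap_relation i j Hi Hj C) as [k [l [Hk [Hl [Hkl [Tkl Gkl]]]]]].
    exists (w1 ++ [k; l] ++ w3); split.
    { apply Forall_app; split; auto; repeat constructor; auto. }
    split.
    + rewrite !wpart_app, Tkl, <- Fq; simpl; rewrite Fa, Fb, !map_map.
      do 3 f_equal; apply map_ext; intros s; exact (f_equal _ (Gkl s)).
    + exact (wcong_context _ w1 w3 _ _ Hkl).
Qed.

Lemma moves_lift x y : star (move m) x y -> forall w, wordI I w -> wpart g w = x ->
  exists w', wordI I w' /\ wpart g w' = y /\ Leq m I g w w'.
Proof.
  induction 1 as [x y H|x|x y z _ IH1 _ IH2]; intros w Hw E.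
  - eapply move_lift; eauto.
  - exists w; repeat split; auto; apply wc_refl.
  - destruct (IH1 w Hw E) as [w1 [W1 [E1 L1]]].
    destruct (IH2 w1 W1 E1) as [w2 [W2 [E2 L2]]].
    exists w2; repeat split; auto; eapply wc_trans; eauto.
Qed.

Lemma Leq_app_rev v : wordI I v -> Leq m I g (v ++ rev v) [].
Proof.
  induction v as [|a v IH]; intros Hv; simpl; [apply wc_refl|].
  inversion Hv; subst; rewrite app_assoc.
  eapply wc_trans; [exact (wcong_context _ [a] [a] _ _ (IH H2)) | apply L_rel_square; auto].
Qed.

Lemma Leq_rev_app v : wordI I v -> Leq m I g (rev v ++ v) [].
Proof.
  induction v as [|a v IH]; intros Hv; simpl; [apply wc_refl|].
  inversion Hv; subst; rewrite <- app_assoc.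
  eapply wc_trans; [exact (wcong_context _ (rev v) v _ _ (L_rel_square a H1)) | exact (IH H2)].
Qed.

Lemma phi_rev_app u : wordI I u -> sd_eq m (phi g (rev u ++ u)) sd_one.
Proof.
  intros Hu; apply (phi_Leq _ _ (Leq_rev_app u Hu)).
  apply Forall_app; split; [apply Forall_rev|]; auto.
Qed.

Lemma phi_injective u v : wordI I u -> wordI I v ->
  sd_eq m (phi g u) (phi g v) -> Leq m I g u v.
Proof.
  intros Hu Hv [E1 E2].
  assert (Hw : wordI I (u ++ rev v)) by (apply Forall_app; split; [|apply Forall_rev]; auto).
  assert (Z : Weq m (wpart g (u ++ rev v)) []).
  { rewrite wpart_app, (map_ext _ _ E2); eapply wc_trans.
    - apply (wcong_app _ _ _ _ _ E1 (wc_refl _ _)).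
    - rewrite <- wpart_app; apply (phi_Leq _ _ (Leq_app_rev v Hv)).
      apply Forall_app; split; [|apply Forall_rev]; auto. }
  destruct (moves_lift _ _ (Weq_nil_moves _ _ RA _ Z) _ Hw eq_refl) as [[|c w] [_ [E L]]];
    [|discriminate].
  exact (wcong_inv_unique _ u (rev v) v L (Leq_rev_app v Hv)).
Qed.

Lemma phi_in_H u : wordI I u -> inH m I g (phi g u).
Proof.
  induction u as [|a u IH]; intros Hu; [apply H_one|].
  inversion Hu; subst; apply H_mul; [apply H_gen | apply IH]; auto.
Qed.

Lemma phi_mul_compat u v p q : wordI I u ->
  sd_eq m (phi g u) p -> sd_eq m (phi g v) q -> sd_eq m (phi g (u ++ v)) (sd_mul p q).
Proof.
  intros Hu [Eu1 Eu2] [Ev1 Ev2]; split; simpl.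
  - rewrite wpart_app; apply wcong_app; auto.
    rewrite <- (map_ext _ _ Eu2 (fst q)); apply (proj1 (gpart_Weq u Hu _ _)); auto.
  - intros s; rewrite gpart_app, Eu2, Ev2; auto.
Qed.

Lemma phi_rev_inverse u p q : wordI I u -> sd_eq m (phi g u) p ->
  sd_eq m (sd_mul p q) sd_one -> sd_eq m (phi g (rev u)) q.
Proof.
  intros Hu [Eu1 Eu2] [H1 H2]; simpl in H1, H2.
  assert (Wr : wordI I (rev u)) by (apply Forall_rev; auto).
  destruct (phi_rev_app u Hu) as [F1 F2]; rewrite wpart_app in F1; simpl in F2.
  assert (F2' : forall s, gpart g (rev u) (snd p s) = s)
    by (intros s; rewrite <- Eu2, <- gpart_app; apply F2).
  split.
  - apply (wcong_inv_unique _ _ (map (gpart g (rev u)) (fst p))).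
    + eapply wc_trans; [|exact F1].
      apply wcong_app; [apply wc_refl|].
      apply (proj1 (gpart_Weq (rev u) Wr _ _)), wc_sym; auto.
    + pose proof (proj1 (gpart_Weq (rev u) Wr _ _) H1) as X.
      rewrite map_app, map_map, (map_ext _ (fun s => s) F2'), map_id in X; exact X.
  - intros s; simpl; rewrite <- (F2' (snd q s)), H2; reflexivity.
Qed.

Lemma H_phi_surj h : inH m I g h -> exists u, wordI I u /\ sd_eq m (phi g u) h.
Proof.
  induction 1 as [|i Hi|p q _ [u [Wu Eu]] _ [v [Wv Ev]]|p q _ [u [Wu Eu]] Hpq|p q _ [u [Wu Eu]] Hpq].
  - exists []; split; [constructor | apply sd_eq_refl].
  - exists [i]; split; [repeat constructor; auto | apply sd_eq_refl].
  - exists (u ++ v); split; [apply Forall_app; auto | apply phi_mul_compat; auto].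
  - exists (rev u); split; [apply Forall_rev; auto | apply (phi_rev_inverse u p); auto].
  - exists u; split; [|eapply sd_eq_trans]; eauto.
Qed.

End PhiIsomorphism.

Theorem lemma1 (S : Type) (m : S -> S -> nat) (G : (S -> S) -> Prop)
  (I : S -> Prop) (g : S -> S -> S) :
  right_angled m ->
  subgroup_Aut m G ->
  (forall i, I i -> G (g i)) ->
  (forall i, I i -> forall s, g i (g i s) = s) ->
  (forall i, I i -> exists s, g i s <> s) ->
  (forall i j, I i -> I j -> Weq m [i; j] [j; i] ->
     (I (g i j) /\ g j i = i /\ (forall s, g (g i j) s = g i (g j (g i s))))
     \/
     (I (g j i) /\ g i j = j /\ (forall s, g (g j i) s = g j (g i (g j s))))) ->
  (forall i, I i -> g i i = i) ->
  (forall u v, wordI I u -> wordI I v -> Leq m I g u v -> sd_eq m (phi g u) (phi g v)) /\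
  (forall u v, wordI I u -> wordI I v -> sd_eq m (phi g (u ++ v)) (sd_mul (phi g u) (phi g v))) /\
  (forall u, wordI I u -> inH m I g (phi g u)) /\
  (forall u v, wordI I u -> wordI I v -> sd_eq m (phi g u) (phi g v) -> Leq m I g u v) /\
  (forall h, inH m I g h -> exists u, wordI I u /\ sd_eq m (phi g u) h).
Proof.
  intros RA [G_aut _] HG g_invol _ g_commuting g_fix.
  assert (g_aut : forall i, I i -> autWS m (g i)) by auto.
  split; [|split; [|split; [|split]]].
  - intros u v Hu _ H; eapply phi_Leq; eauto.
  - intros u v _ _; split; [rewrite wpart_app; apply wc_refl | apply gpart_app].
  - apply phi_in_H.
  - intros; eapply phi_injective; eauto.
  - intros; eapply H_phi_surj; eauto.
Qed.
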